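(* Consider the multi-agent setting described in the context, with parameters $\alpha>0$ and $F\in\mathbb Z_{\ge0}$. Assume: - the set $\mathcal A$ of misbehaving agents is $F$-local; - the digraph $\mathcal D$ is $(2F+1)$-robust. Let $x_{\mathcal N}:[0,t_1)\to\mathbb R^{|\mathcal N|}$ be a trajectory of the normal agents. Then the derivatives $\frac{d}{dt}M(x_{\mathcal N}(t))$ and $\frac{d}{dt}m(x_{\mathcal N}(t))$ exist at almost all $t\in[0,t_1)$, and at almost all such $t$, $$\tfrac{d}{dt}M(x_{\mathcal N}(t))\in[-\alpha,0],\qquad \tfrac{d}{dt}m(x_{\mathcal N}(t))\in[0,\alpha].$$
   Context: Setting. Let $\mathcal D=(\mathcal V,\mathcal E)$ be a digraph with $\mathcal V=\{1,\dots,n\}$ and $n\ge2$. An edge $(i,j)\in\mathcal E$ means that agent $j$ receives information from agent $i$. The in-neighbor set of $i$ is $\mathcal V_i=\{j:(j,i)\in\mathcal E\}$, and $\mathcal J_i=\mathcal V_i\cup\{i\}$. - A nonempty $S\subset\mathcal V$ is $r$-reachable if some $i\in S$ has $|\mathcal V_i\setminus S|\ge r$. - $\mathcal D$ is $r$-robust if for every pair of nonempty disjoint subsets of $\mathcal V$, at least one of them is $r$-reachable. Dynamics and communication. Each agent has a scalar state with $\dot x_i(t)=u_i(t)$. Fix a strictly increasing $g:\mathbb R\to\mathbb R$ (not necessarily continuous). At time $t$, agent $i$ receives from each in-neighbor $j$ a value $g(x^i_j(t))$. The agents are partitioned into normal agents $\mathcal N$ and misbehaving agents $\mathcal A$. -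 A normal agent $j$ sends $g(x_j(t))$ to all its out-neighbors, so $x^i_j=x_j$, and updates via the FTRC protocol. - Misbehaving agents may use arbitrary inputs and may send arbitrary, possibly different, values to different out-neighbors. The only restriction is that $t\mapsto g(x^i_k(t))$ is Lebesgue measurable for all $k\in\mathcal A$ and $i\in\mathcal N$. - $\mathcal A$ is $F$-local if $|\mathcal V_i\cap\mathcal A|\le F$ for every $i\in\mathcal V\setminus\mathcal A$. FTRC protocol for a normal agent $i$ at time $t$: 1. Sort the received values $g(x^i_j(t))$, $j\in\mathcal V_i$. 2. If fewer than $F$ values are strictly larger than $g(x_i(t))$, remove all values strictly larger than $g(x_i(t))$; otherwise remove exactly the $F$ largest values. 3. Likewise, if fewer than $F$ values are strictly smaller than $g(x_i(t))$, remove all values strictly smaller; otherwise remove exactly the $F$ smallest values. 4. With $\mathcal R_i(t)$ the set of agents whose values were removed, set $u_i(t)=\alpha\,\mathrm{sign}\big(\sum_{j\in\mathcal J_i\setminus\mathcal R_i(t)}(g(x^i_j(t))-g(x_i(t)))\big)$, where $x^i_i=x_i$ and $\mathrm{sign}(0)=0$. Trajectories and auxiliary functions. Write $x_{\mathcal N}=(x_{\mathcal N_1},\dots,x_{\mathcal N_{|\mathcal N|}})^T$ for a fixed ordering of $\mathcal N$. A trajectory of the normal agents on an interval $I\ni0$ is an absolutely continuous $x_{\mathcal N}:I\to\mathbb R^{|\mathcal N|}$ with $\dot x_{\mathcal N_k}(t)=u_{\mathcal N_k}(t)$ for all $k$ and almost every $t\in I$, where the $u$'s are given by the FTRC protocol.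 Define $M(x)=\max_k x_k$ and $m(x)=\min_k x_k$ for $x\in\mathbb R^{|\mathcal N|}$. *)

From HB Require Import structures.
From mathcomp Require Import all_boot all_order all_algebra.
From mathcomp Require Import all_classical all_reals all_analysis.
Set Implicit Arguments.
Unset Strict Implicit.
Unset Printing Implicit Defensive.
Import Order.TTheory GRing.Theory Num.Theory numFieldNormedType.Exports.
Local Open Scope ring_scope.

(* Lebesgue-measurable subsets of R: the Caratheodory sigma-algebra of the
   Lebesgue outer measure (= completion of the Borel sets), i.e. the
   sigma-algebra of the completed Lebesgue measure. *)
Definition lebesgue_measurable_set {R : realType} (S : set R) : Prop :=
  ((((@wlength R idfun)^*)%mu).-cara.-measurable)%classic S.

Definition lebesgue_measurable_on {R : realType} (D : set R) (f : R -> R)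
  : Prop :=
  forall B : set R, measurable B -> lebesgue_measurable_set (D `&` f @^-1` B)%classic.

Definition abs_continuous_on {R : realType} (a b : R) (f : R -> R) : Prop :=
  forall eps : R, 0 < eps -> exists2 delta : R, 0 < delta &
    forall (k : nat) (s : 'I_k -> R * R),
      (forall i, a <= (s i).1 /\ (s i).1 <= (s i).2 /\ (s i).2 <= b) ->
      (forall i j, i != j -> (s i).2 <= (s j).1 \/ (s j).2 <= (s i).1) ->
      \sum_(i < k) ((s i).2 - (s i).1) < delta ->
      \sum_(i < k) `|f (s i).2 - f (s i).1| < eps.

Definition loc_abs_continuous {R : realType} (I : set R) (f : R -> R) : Prop :=
  forall a b : R, I a -> I b -> a <= b -> abs_continuous_on a b f.

Definition time_itv {R : realType} (t1 : \bar R) : set R :=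
  [set t : R | 0 <= t /\ (t%:E < t1)%E]%classic.

(* E j i  means  (j, i) is an edge: agent i receives information from j. *)
Definition in_nbrs {n : nat} (E : rel 'I_n) (i : 'I_n) : {set 'I_n} :=
  [set j | E j i].

Definition closed_in_nbrs {n : nat} (E : rel 'I_n) (i : 'I_n) : {set 'I_n} :=
  i |: in_nbrs E i.

Definition r_reachable {n : nat} (E : rel 'I_n) (S : {set 'I_n}) (r : nat)
  : Prop :=
  exists2 i, i \in S & (r <= #|in_nbrs E i :\: S|)%N.

Definition r_robust {n : nat} (E : rel 'I_n) (r : nat) : Prop :=
  forall S1 S2 : {set 'I_n}, S1 != finset.set0 -> S2 != finset.set0 -> [disjoint S1 & S2] ->
    r_reachable E S1 r \/ r_reachable E S2 r.

Definition F_local {n : nat} (E : rel 'I_n) (A : {set 'I_n}) (F : nat) : Prop :=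
  forall i, i \notin A -> (#|in_nbrs E i :&: A| <= F)%N.

(* Value g(x^i_j(t)) received by agent i from agent j at time t.
   x t j : state of (normal) agent j at time t;
   y t j i : the value x^i_j(t) chosen by a misbehaving agent j for its
   out-neighbour i (it sends g (y t j i)). *)
Definition received {R : realType} {n : nat} (g : R -> R) (A : {set 'I_n})
  (x : R -> 'I_n -> R) (y : R -> 'I_n -> 'I_n -> R) (t : R) (i j : 'I_n) : R :=
  if j \in A then g (y t j i) else g (x t j).

(* Steps 2-3 of FTRC: Rup (resp. Rdn) is the set of agents whose values are
   removed as "too large" (resp. "too small"), given the received values v
   over the in-neighbour set Vi and own value c = g(x_i(t)):
   if fewer than F values are > c, all of them are removed; otherwise exactly
   F largest ones (ties broken arbitrarily -- the resulting sum does not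
   depend on the tie-breaking). *)
Definition ftrc_removed {R : realType} {n : nat} (F : nat) (Vi : {set 'I_n})
  (v : 'I_n -> R) (c : R) (Rup Rdn : {set 'I_n}) : Prop :=
  let up := [set j in Vi | c < v j] in
  let dn := [set j in Vi | v j < c] in
  [/\ Rup \subset up, #|Rup| = minn F #|up| &
      (forall j k, j \in Rup -> k \in up :\: Rup -> v k <= v j)] /\
  [/\ Rdn \subset dn, #|Rdn| = minn F #|dn| &
      (forall j k, j \in Rdn -> k \in dn :\: Rdn -> v j <= v k)].

Definition ftrc_input {R : realType} {n : nat} (g : R -> R) (A : {set 'I_n})
  (E : rel 'I_n) (alpha : R) (x : R -> 'I_n -> R) (y : R -> 'I_n -> 'I_n -> R)
  (t : R) (i : 'I_n) (Rup Rdn : {set 'I_n}) : R :=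
  alpha * Num.sg (\sum_(j in closed_in_nbrs E i :\: (Rup :|: Rdn))
                    ((if j == i then g (x t i) else received g A x y t i j)
                     - g (x t i))).

Definition ftrc_trajectory {R : realType} {n : nat} (g : R -> R)
  (A : {set 'I_n}) (E : rel 'I_n) (F : nat) (alpha : R) (I : set R)
  (x : R -> 'I_n -> R) (y : R -> 'I_n -> 'I_n -> R) : Prop :=
  forall i, i \notin A ->
    loc_abs_continuous I (fun t => x t i) /\
    {ae (@lebesgue_measure R), forall t, I t ->
       derivable (fun s => x s i) t 1 /\
       exists Rup Rdn,
         ftrc_removed F (in_nbrs E i) (received g A x y t i) (g (x t i))
           Rup Rdn /\
         derive1 (fun s => x s i) t = ftrc_input g A E alpha x y t i Rup Rdn}.

(* M and m over the normal agents (N = complement of A, assumed nonempty). *)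
Definition maxN {R : realType} {n : nat} (A : {set 'I_n}) (x : 'I_n -> R) : R :=
  fine (\big[Order.max/-oo%E]_(i | i \notin A) (x i)%:E)%E.
Definition minN {R : realType} {n : nat} (A : {set 'I_n}) (x : 'I_n -> R) : R :=
  fine (\big[Order.min/+oo%E]_(i | i \notin A) (x i)%:E)%E.

From HB Require Import structures.
From mathcomp Require Import all_boot all_order all_algebra.
From mathcomp Require Import all_classical all_reals all_analysis.
Import Order.TTheory GRing.Theory Num.Theory numFieldNormedType.Exports.
Local Open Scope classical_set_scope.
Local Open Scope ring_scope.

(* At almost every time all normal states are differentiable and no two of
   them cross transversally, since transversal crossings are isolated and hence
   countable.  At such a time two normal agents with equal states have equal
   slopes, so M is differentiable with the slope of any maximising agent k.  A
   value received by k exceeding g(x_k) cannot come from a normal agent, so by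
   F-locality there are at most F of them and FTRC removes them all: the sum
   in k's input is <= 0, whence -alpha <= M' <= 0.  Dually for m. *)

Section difference_quotient.
Context {R : realType}.
Implicit Types (f : R -> R) (t d : R).

Definition diff_quot f t (h : R) : R := h^-1 * (f (h + t) - f t).

Lemma derivable_diff_quotE f t : derivable f t 1 = cvg (diff_quot f t @ 0^').
Proof.
rewrite /derivable.
suff -> : (fun h : R => h^-1 *: ((f \o shift t) (h *: 1) - f t)) = diff_quot f t.
  by [].
by apply/funext => h; rewrite /diff_quot /= [h%:A]mulr1.
Qed.

Lemma diff_quot_cvg f t : derivable f t 1 -> diff_quot f t @ 0^' --> derive1 f t.
Proof. by rewrite derivable_diff_quotE. Qed.

Lemma diff_quot_derivable f t d :
  diff_quot f t @ 0^' --> d -> derivable f t 1 /\ derive1 f t = d.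
Proof.
move=> dq; split; first by rewrite derivable_diff_quotE; apply/cvg_ex; exists d.
exact: cvg_lim dq.
Qed.

Lemma near_dnbhs_shift t (P : set R) :
  (\forall h \near 0^', P (h + t)) = \forall s \near t^', P s.
Proof.
change ((\forall h \near 0, h != 0 -> P (h + t)) =
        \forall s \near t, s != t -> P s).
rewrite (near_shift 0 t).
apply: (@eq_near _ (nbhs (0 : R))) => h /=; rewrite subr0.
suff -> : (h + t == t) = (h == 0) by [].
by rewrite -subr_eq0 addrK.
Qed.

End difference_quotient.

Section crossings.
Context {R : realType}.
Implicit Types f : R -> R.

Definition crossing_set f1 f2 : set R := [set t |
  [/\ derivable f1 t 1, derivable f2 t 1, f1 t = f2 t &
      derive1 f1 t != derive1 f2 t]].

Lemma crossing_set_isolated f1 f2 :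
  crossing_set f1 f2 `<=` isolated (crossing_set f1 f2).
Proof.
move=> t [d1 d2 f12t slopes]; split; first exact/mem_set.
have near_t : \forall s \near t^', f1 s != f2 s.
  rewrite -near_dnbhs_shift.
  have : \forall h \near 0^', (diff_quot f1 t - diff_quot f2 t) h != 0.
    apply: (cvgr_neq0 (derive1 f1 t - derive1 f2 t)); last by rewrite subr_eq0.
    exact: cvgB (diff_quot_cvg _ _ d1) (diff_quot_cvg _ _ d2).
  apply: filterS => h /=; apply: contraNneq => f12h.
  by rewrite !fctE /diff_quot f12h f12t subrr.
exists [set s | s != t -> f1 s != f2 s] => //.
apply/seteqP; split=> [s [/= Vs [_ _ f12s _]]|_ ->]; last by split=> //= /eqP.
by apply: contrapT => /eqP /Vs; rewrite f12s eqxx.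
Qed.

Lemma ae_not_crossing f1 f2 :
  {ae (@lebesgue_measure R), forall t, ~ crossing_set f1 f2 t}.
Proof.
have cnt : countable (crossing_set f1 f2).
  exact: sub_countable (subset_card_le (crossing_set_isolated f1 f2))
                       (countable_isolated _).
exists (crossing_set f1 f2); split => [| |t /= /contrapT//].
- by apply: countable_measurable cnt => t; exact: measurable_set1.
- exact: countable_lebesgue_measure0 cnt.
Qed.

End crossings.

Section pointwise_extremum.
Context {R : realType}.

Lemma continuous_lt_near (f g : R -> R) t :
  {for t, continuous f} -> {for t, continuous g} -> f t < g t ->
  \forall s \near t, f s < g s.
Proof.
move=> cf cg fg; have : (g - f) @ t --> g t - f t by exact: cvgB.
move=> /cvgr_gt /(_ 0); rewrite subr_gt0 => /(_ fg).
by apply: filterS => s; rewrite !fctE subr_gt0.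
Qed.

Lemma derivable_max_family {I : finType} {N : pred I} {f : I -> R -> R}
    {Phi : R -> R} {t k} :
  (forall s i, N i -> f i s <= Phi s) ->
  (forall s, exists2 j, N j & Phi s = f j s) ->
  (forall i, N i -> derivable (f i) t 1) ->
  (forall i j, N i -> N j -> f i t = f j t ->
     derive1 (f i) t = derive1 (f j) t) ->
  N k -> Phi t = f k t ->
  derivable Phi t 1 /\ derive1 Phi t = derive1 (f k) t.
Proof.
move=> Phi_ub Phi_attained df tangent Nk Phi_t.
apply: diff_quot_derivable; apply/(cvgrPdist_lt _ _).2 => eps eps_gt0.
have close : \forall h \near 0^', forall i, N i ->
    `|derive1 (f i) t - diff_quot (f i) t h| < eps.
  apply: filter_forall => i; have [Ni|Ni] := boolP (N i); last first.
    by apply: nearW => h /negP.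
  near=> h => _; near: h.
  exact: cvgr_dist_lt (diff_quot_cvg _ _ (df i Ni)) _ eps_gt0.
have stay_below : \forall h \near 0^', forall i, N i -> f i t < f k t ->
    f i (h + t) < f k (h + t).
  apply: filter_forall => i.
  have [/andP[Ni lt]|] := boolP (N i && (f i t < f k t)); last first.
    by move=> /nandP[] /negP nN; apply: nearW => h // _ /nN.
  suff : \forall h \near 0^', f i (h + t) < f k (h + t) by apply: filterS.
  rewrite (near_dnbhs_shift t (fun s => f i s < f k s)); apply: nbhs_dnbhs.
  have cont j : N j -> {for t, continuous (f j)}.
    by move=> Nj; exact/differentiable_continuous/derivable1_diffP/df.
  exact: continuous_lt_near (cont i Ni) (cont k Nk) lt.
apply: filterS2 close stay_below => h close_h below_h.
have [j Nj Phi_h] := Phi_attained (h + t).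
have fjt : f j t = f k t.
  apply/eqP; rewrite eq_le -{1}Phi_t Phi_ub //= leNgt; apply/negP => lt.
  by have := below_h j Nj lt; rewrite ltNge -Phi_h Phi_ub.
rewrite /diff_quot Phi_h Phi_t -fjt (tangent k j Nk Nj (esym fjt)).
exact: close_h.
Unshelve. all: by end_near.
Qed.

Lemma derivable_min_family {I : finType} {N : pred I} {f : I -> R -> R}
    {Phi : R -> R} {t k} :
  (forall s i, N i -> Phi s <= f i s) ->
  (forall s, exists2 j, N j & Phi s = f j s) ->
  (forall i, N i -> derivable (f i) t 1) ->
  (forall i j, N i -> N j -> f i t = f j t ->
     derive1 (f i) t = derive1 (f j) t) ->
  N k -> Phi t = f k t ->
  derivable Phi t 1 /\ derive1 Phi t = derive1 (f k) t.
Proof.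
move=> Phi_lb Phi_attained df tangent Nk Phi_t.
have [dNPhi NPhi_t] :
    derivable (- Phi) t 1 /\ derive1 (- Phi) t = derive1 (- f k) t.
  apply: (@derivable_max_family _ N (fun i => - f i)) => //=.
  - by move=> s i Ni; rewrite !fctE lerN2 Phi_lb.
  - move=> s; have [j Nj Phi_s] := Phi_attained s.
    by exists j; rewrite // !fctE Phi_s.
  - by move=> i Ni; exact/derivableN/df.
  - move=> i j Ni Nj; rewrite !fctE => /oppr_inj fij.
    by rewrite !derive1N ?(tangent i j) //; exact: df.
  - by rewrite !fctE Phi_t.
have dPhi : derivable Phi t 1 by rewrite -[Phi]opprK; exact: derivableN.
by split=> //; apply: oppr_inj; rewrite -!derive1N //; exact: df.
Qed.

End pointwise_extremum.

Section normal_extremum.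
Context {R : realType} {n : nat} (A : {set 'I_n}).
Implicit Type v : 'I_n -> R.

Lemma maxN_attained v :
  (exists i, i \notin A) -> exists2 k, k \notin A & maxN A v = v k.
Proof.
move=> [i iA]; rewrite /maxN.
have [k kA ->] := eq_bigmax i [pred i | i \notin A] (fun i => (v i)%:E) iA
  (fun i _ => leNye _).
by exists k.
Qed.

Lemma maxN_ub v i : i \notin A -> v i <= maxN A v.
Proof.
move=> iA; have [k kA kmax] := eq_bigmax i [pred i | i \notin A]
  (fun i => (v i)%:E) iA (fun i _ => leNye _).
by rewrite /maxN kmax /= -lee_fin -kmax; exact: le_bigmax_cond.
Qed.

Lemma minN_attained v :
  (exists i, i \notin A) -> exists2 k, k \notin A & minN A v = v k.
Proof.
move=> [i iA]; rewrite /minN.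
have [k kA ->] := eq_bigmin i [pred i | i \notin A] (fun i => (v i)%:E) iA
  (fun i _ => leey _).
by exists k.
Qed.

Lemma minN_lb v i : i \notin A -> minN A v <= v i.
Proof.
move=> iA; have [k kA kmin] := eq_bigmin i [pred i | i \notin A]
  (fun i => (v i)%:E) iA (fun i _ => leey _).
by rewrite /minN kmin /= -lee_fin -kmin; exact: bigmin_le_cond.
Qed.

End normal_extremum.

Section ftrc_at_extremum.
Context {R : realType} {n : nat}.

Lemma ftrc_removed_up {F Vi} {v : 'I_n -> R} {c Rup Rdn} :
  ftrc_removed F Vi v c Rup Rdn -> (#|[set j in Vi | (c < v j)%R]| <= F)%N ->
  Rup = [set j in Vi | c < v j].
Proof.
move=> [[sub card _] _] upF; apply/eqP.
by rewrite eqEcard sub card (minn_idPr upF) leqnn.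
Qed.

Lemma ftrc_removed_dn {F Vi} {v : 'I_n -> R} {c Rup Rdn} :
  ftrc_removed F Vi v c Rup Rdn -> (#|[set j in Vi | (v j < c)%R]| <= F)%N ->
  Rdn = [set j in Vi | v j < c].
Proof.
move=> [_ [sub card _]] dnF; apply/eqP.
by rewrite eqEcard sub card (minn_idPr dnF) leqnn.
Qed.

Variables (g : R -> R) (A : {set 'I_n}) (E : rel 'I_n) (F : nat).
Variables (x : R -> 'I_n -> R) (y : R -> 'I_n -> 'I_n -> R) (t : R) (k : 'I_n).
Hypotheses (g_incr : {homo g : a b / a < b}) (A_local : F_local E A F).
Hypothesis kA : k \notin A.

Lemma ftrc_sum_le0_at_max Rup Rdn :
  (forall j, j \notin A -> x t j <= x t k) ->
  ftrc_removed F (in_nbrs E k) (received g A x y t k) (g (x t k)) Rup Rdn ->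
  \sum_(j in closed_in_nbrs E k :\: (Rup :|: Rdn))
     ((if j == k then g (x t k) else received g A x y t k j) - g (x t k)) <= 0.
Proof.
move=> kmax rem; set v := received g A x y t k.
set up := [set j in in_nbrs E k | g (x t k) < v j].
have up_misbehaving : up \subset in_nbrs E k :&: A.
  apply/fintype.subsetP => j; rewrite !inE => /andP[-> gt] /=.
  apply: contraTT gt => jA.
  by rewrite /v /received (negbTE jA) -leNgt (le_mono g_incr) kmax.
have Rup_up := ftrc_removed_up rem
  (leq_trans (subset_leq_card up_misbehaving) (A_local _ kA)).
apply: sumr_le0 => j; rewrite !inE => /andP[notR Jj].
case: eqP Jj => [_ _|_ /= Ejk]; first by rewrite subrr.
rewrite subr_le0 leNgt; apply: contra notR => gt.
by rewrite Rup_up !inE Ejk gt.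
Qed.

Lemma ftrc_sum_ge0_at_min Rup Rdn :
  (forall j, j \notin A -> x t k <= x t j) ->
  ftrc_removed F (in_nbrs E k) (received g A x y t k) (g (x t k)) Rup Rdn ->
  0 <= \sum_(j in closed_in_nbrs E k :\: (Rup :|: Rdn))
     ((if j == k then g (x t k) else received g A x y t k j) - g (x t k)).
Proof.
move=> kmin rem; set v := received g A x y t k.
set dn := [set j in in_nbrs E k | v j < g (x t k)].
have dn_misbehaving : dn \subset in_nbrs E k :&: A.
  apply/fintype.subsetP => j; rewrite !inE => /andP[-> lt] /=.
  apply: contraTT lt => jA.
  by rewrite /v /received (negbTE jA) -leNgt (le_mono g_incr) kmin.
have Rdn_dn := ftrc_removed_dn rem
  (leq_trans (subset_leq_card dn_misbehaving) (A_local _ kA)).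
apply: sumr_ge0 => j; rewrite !inE => /andP[notR Jj].
case: eqP Jj => [_ _|_ /= Ejk]; first by rewrite subrr.
rewrite subr_ge0 leNgt; apply: contra notR => lt.
by rewrite Rdn_dn !inE Ejk lt orbT.
Qed.

Variable alpha : R.
Hypothesis alpha_gt0 : 0 < alpha.

Lemma ftrc_input_at_max Rup Rdn :
  (forall j, j \notin A -> x t j <= x t k) ->
  ftrc_removed F (in_nbrs E k) (received g A x y t k) (g (x t k)) Rup Rdn ->
  - alpha <= ftrc_input g A E alpha x y t k Rup Rdn <= 0.
Proof.
move=> kmax /(ftrc_sum_le0_at_max _ _ kmax); rewrite /ftrc_input.
rewrite le_eqVlt => /predU1P[->|/ltr0_sg->].
  by rewrite sgr0 mulr0 lexx oppr_le0 ltW.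
by rewrite mulrN1 lexx oppr_le0 ltW.
Qed.

Lemma ftrc_input_at_min Rup Rdn :
  (forall j, j \notin A -> x t k <= x t j) ->
  ftrc_removed F (in_nbrs E k) (received g A x y t k) (g (x t k)) Rup Rdn ->
  0 <= ftrc_input g A E alpha x y t k Rup Rdn <= alpha.
Proof.
move=> kmin /(ftrc_sum_ge0_at_min _ _ kmin); rewrite /ftrc_input.
rewrite le_eqVlt => /predU1P[<-|/gtr0_sg->].
  by rewrite sgr0 mulr0 lexx ltW.
by rewrite mulr1 lexx ltW.
Qed.

End ftrc_at_extremum.

Theorem theorem3 (R : realType) (n : nat) (E : rel 'I_n) (A : {set 'I_n})
  (g : R -> R) (alpha : R) (F : nat) (t1 : \bar R)
  (x : R -> 'I_n -> R) (y : R -> 'I_n -> 'I_n -> R) :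
  (2 <= n)%N ->
  (exists i : 'I_n, i \notin A) ->
  {homo g : a b / a < b} ->
  0 < alpha ->
  (forall k i, k \in A -> i \notin A ->
     lebesgue_measurable_on (time_itv t1) (fun t => g (y t k i))) ->
  F_local E A F ->
  r_robust E (2 * F + 1) ->
  (0%:E < t1)%E ->
  ftrc_trajectory g A E F alpha (time_itv t1) x y ->
  {ae (@lebesgue_measure R), forall t, time_itv t1 t ->
     derivable (fun s => maxN A (x s)) t 1 /\
     - alpha <= derive1 (fun s => maxN A (x s)) t <= 0} /\
  {ae (@lebesgue_measure R), forall t, time_itv t1 t ->
     derivable (fun s => minN A (x s)) t 1 /\
     0 <= derive1 (fun s => minN A (x s)) t <= alpha}.
Proof.
move=> _ normal_ex g_incr alpha_gt0 _ A_local _ _ traj.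
(* [ae_filter_ringOfSetsType] is not declared as an instance. *)
have ae_filter : Filter (almost_everywhere (@lebesgue_measure R)).
  exact: ae_filter_ringOfSetsType.
have ae_traj : {ae (@lebesgue_measure R), forall t i,
    i \notin A -> time_itv t1 t ->
    derivable (fun s => x s i) t 1 /\
    exists Rup Rdn,
      ftrc_removed F (in_nbrs E i) (received g A x y t i) (g (x t i)) Rup Rdn /\
      derive1 (fun s => x s i) t = ftrc_input g A E alpha x y t i Rup Rdn}.
  apply: filter_forall => i; have [iA|iA] := boolP (i \in A).
    by apply: aeW => t /negP.
  by apply: filterS (traj i iA).2 => t + _.
have ae_cross : {ae (@lebesgue_measure R), forall t i j,
    ~ crossing_set (fun s => x s i) (fun s => x s j) t}.
  by apply: filter_forall => i; apply: filter_forall => j; exact: ae_not_crossing.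
have ae_regular : {ae (@lebesgue_measure R), forall t, time_itv t1 t ->
    [/\ forall i, i \notin A -> derivable (fun s => x s i) t 1,
        forall i j, i \notin A -> j \notin A -> x t i = x t j ->
          derive1 (fun s => x s i) t = derive1 (fun s => x s j) t &
        forall i, i \notin A -> exists Rup Rdn,
          ftrc_removed F (in_nbrs E i) (received g A x y t i) (g (x t i))
            Rup Rdn /\
          derive1 (fun s => x s i) t = ftrc_input g A E alpha x y t i Rup Rdn]}.
  apply: filterS2 ae_traj ae_cross => t trajt crosst It.
  have df i : i \notin A -> derivable (fun s => x s i) t 1.
    by move=> iA; have [] := trajt i iA It.
  split=> [//|i j iA jA xij|i iA]; last by have [] := trajt i iA It.
  apply/eqP/negPn/negP => slopes; apply: (crosst i j).
  by split=> //; apply: df.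
split; apply: filterS ae_regular => t /[apply] -[df tangent input].
- have [k kA Mk] := maxN_attained A (x t) normal_ex.
  have [dM ->] := derivable_max_family (f := fun i s => x s i)
    (fun s => maxN_ub A (x s)) (fun s => maxN_attained A (x s) normal_ex)
    df tangent kA Mk.
  have [Rup [Rdn [rem ->]]] := input k kA.
  split=> //; apply: ftrc_input_at_max rem => // j jA.
  by rewrite -Mk maxN_ub.
- have [k kA mk] := minN_attained A (x t) normal_ex.
  have [dm ->] := derivable_min_family (f := fun i s => x s i)
    (fun s => minN_lb A (x s)) (fun s => minN_attained A (x s) normal_ex)
    df tangent kA mk.
  have [Rup [Rdn [rem ->]]] := input k kA.
  split=> //; apply: ftrc_input_at_min rem => // j jA.
  by rewrite -mk minN_lb.
Qed.
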